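(* There is an absolute constant $K$ such that for every $0<\epsilon<1$ and every $N\ge1$: at any time after a total of $N$ insertions into a soft sequence heap with error parameter $\epsilon$, the total number of items contained in the sequences $L_1,\dots,L_\ell$ is at most $K\sqrt{N/\epsilon}$.
   Context: Soft sequence heap with error parameter $0<\epsilon<1$ and $r_0=\lceil \lg(1/\epsilon)\rceil$ ($\lg$ = binary logarithm). The heap stores a list $L_1,\dots,L_\ell$ of nonempty sequences of items, each sorted increasingly by key and having a nonnegative integer rank, with strictly increasing (hence distinct) ranks. The operation $\mathrm{reduce}(L)$ on a sorted sequence $L=e_1,\dots,e_m$ removes $e_{2i}$ from $L$ for every $1\le i<m/2$, so the result has $\lceil (m+1)/2\rceil$ items (removed items are moved into auxiliary corruption/witness sets, not counted as sequence items). A sequence of rank $0$ is created by an insertion and contains one item. A sequence of rank $r+1$ is created only by merging (sorted union) two sequences of rank $r$; if $r+1>r_0$ and $r+1-r_0$ is even, $\mathrm{reduce}$ is then applied. Insertions and melds repeatedly merge equal-rank sequences until all ranks are distinct; otherwise items are only removed from sequences. *)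

From mathcomp Require Import all_boot.
From Stdlib Require Import Reals.

Set Implicit Arguments.
Unset Strict Implicit.
Unset Printing Implicit Defensive.

(* A sequence of the heap: its items (keys, sorted increasingly) and its rank. *)
Definition sseq := (seq nat * nat)%type.
Definition items (s : sseq) : seq nat := s.1.
Definition rank (s : sseq) : nat := s.2.

(* reduce(e_1..e_m) removes e_{2i} for 1 <= i < m/2, i.e. keeps (0-based)
   positions k that are even, or k = m-1. *)
Definition reduce (l : seq nat) : seq nat :=
  mask [seq ~~ odd k || (k == (size l).-1) | k <- iota 0 (size l)] l.

Definition link (r0 : nat) (a b : sseq) : sseq :=
  let r := (rank a).+1 in
  let m := merge leq (items a) (items b) in
  (if (r0 < r) && ~~ odd (r - r0) then reduce m else m, r).

(* Repeatedly merge two sequences of equal rank until all ranks are distinct;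
   the result is listed in strictly increasing rank order. *)
Inductive consolidates (r0 : nat) : seq sseq -> seq sseq -> Prop :=
| cons_done l l' :
    perm_eq l l' -> sorted ltn (map rank l') -> consolidates r0 l l'
| cons_step l a b rest l' :
    perm_eq l [:: a, b & rest] -> rank a = rank b ->
    consolidates r0 (link r0 a b :: rest) l' -> consolidates r0 l l'.

(* Removing items from sequences (sequences that become empty disappear). *)
Definition shrinks (h h' : seq sseq) : Prop :=
  exists h'' : seq sseq,
    all2 (fun s t => (rank t == rank s) && subseq (items t) (items s)) h h''
    /\ h' = [seq t <- h'' | items t != [::]].

(* reachable r0 h N : heap h is obtainable with N insertions in total
   (over all heaps melded into it). *)
Inductive reachable (r0 : nat) : seq sseq -> nat -> Prop :=
| reach_empty : reachable r0 [::] 0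
| reach_insert h n x h' :
    reachable r0 h n -> consolidates r0 (([:: x], 0) :: h) h' ->
    reachable r0 h' n.+1
| reach_meld h1 n1 h2 n2 h' :
    reachable r0 h1 n1 -> reachable r0 h2 n2 ->
    consolidates r0 (h1 ++ h2) h' -> reachable r0 h' (n1 + n2)
| reach_remove h n h' :
    reachable r0 h n -> shrinks h h' -> reachable r0 h' n.

Definition total_items (h : seq sseq) : nat := sumn [seq size (items s) | s <- h].

(* r0 = ceil(lg(1/eps)), characterised by r0 - 1 < lg(1/eps) <= r0. *)
Definition is_r0 (eps : R) (r0 : nat) : Prop :=
  (INR r0 - 1 < ln (/ eps) / ln 2 <= INR r0)%R.

From mathcomp Require Import all_boot.
From Stdlib Require Import Reals Lra.
(* Reals rebinds [^] in nat_scope to Nat.pow; importing ssrnat again restores expn. *)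
From mathcomp Require Import ssrnat zify.

Set Implicit Arguments.
Unset Strict Implicit.

(* A sequence of rank r holds at most [capacity r0 r] items: capacity 1 at
   rank 0, and each link either doubles it (plain merge) or adds one to it
   (merge followed by reduce).  The heap invariant [reachable_invariant]
   says: every sequence respects its capacity, the ranks are strictly
   increasing, and the weight sum_i 2^(rank L_i) is at most N (a sequence
   of rank r accounts for 2^r insertions, removals only lower the weight).
   Hence every rank is at most floor(lg N).  Since reduce is applied at
   every second rank above r0, capacity r0 r <= 4 * 2^((r + r0)/2); summing
   this geometric-like series over the distinct ranks <= lg N bounds the
   square of the number of items by 288 * N * 2^r0 [total_items_sq_bound].
   Finally 2^r0 < 2/eps by the choice of r0, which gives the theorem. *)

Lemma count_even_iota n : count (fun k => ~~ odd k) (iota 0 n) = uphalf n.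
Proof.
elim: n => [//|n IH].
rewrite -addn1 iotaD count_cat IH /= addn0 add0n uphalf_half /=.
by case: (odd n) => /=; lia.
Qed.

(* reduce keeps the items at even positions, plus possibly the last one. *)
Lemma size_reduce l : size (reduce l) <= uphalf (size l) + 1.
Proof.
rewrite /reduce size_mask ?size_map ?size_iota // count_map.
have := count_predUI (fun k => ~~ odd k) (pred1 (size l).-1) (iota 0 (size l)).
rewrite count_even_iota count_uniq_mem ?iota_uniq //.
have -> : count (predU (fun k => ~~ odd k) (pred1 (size l).-1)) (iota 0 (size l))
        = count (fun k => ~~ odd k || (k == (size l).-1)) (iota 0 (size l)) by [].
by case: (_ \in _) => /=; lia.
Qed.

(* The maximal size of a sequence of rank r: linking two sequences of rank r
   yields twice the size, or one more after a reduce. *)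
Fixpoint capacity (r0 r : nat) : nat :=
  if r is r'.+1 then
    if (r0 < r) && ~~ odd (r - r0) then (capacity r0 r').+1
    else (capacity r0 r').*2
  else 1.

Section Capacity.

Variable r0 : nat.

(* Up to rank r0 no reduce happens: capacities are powers of two. *)
Lemma capacity_below r : r <= r0 -> capacity r0 r = 2 ^ r.
Proof.
elim: r => // r IH le_r.
by rewrite [LHS]/= ltnNge le_r /= IH ?(ltnW le_r) // expnS mul2n.
Qed.

Lemma capacity_odd_offset j :
  capacity r0 (r0 + j.*2).+1 = (capacity r0 (r0 + j.*2)).*2.
Proof.
by rewrite [LHS]/= subSn ?leq_addr // addKn /= odd_double.
Qed.

Lemma capacity_even_offset j :
  capacity r0 (r0 + j.*2).+2 = (capacity r0 (r0 + j.*2).+1).+1.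
Proof.
rewrite [LHS]/= ifT // !subSn ?leq_addr ?addKn ?odd_double //; lia.
Qed.

Lemma capacity_even_bound j : (capacity r0 (r0 + j.*2)).+1 <= 2 ^ (r0 + j).+1.
Proof.
elim: j => [|j IH].
  by rewrite addn0 capacity_below // ltn_exp2l.
rewrite doubleS !addnS capacity_even_offset capacity_odd_offset expnS.
by move: IH; lia.
Qed.

(* Capacity grows like 2^(r/2) above r0, hence the bound by 2^((r + r0)/2). *)
Lemma capacity_bound r : capacity r0 r <= 4 * 2 ^ ((r + r0)./2).
Proof.
have [le_r|lt_r] := leqP r r0.
  rewrite capacity_below // (leq_trans _ (leq_pmull _ _)) //.
  by rewrite leq_pexp2l //; lia.
have [j [->|->]] : exists j, r = r0 + j.*2 \/ r = (r0 + j.*2).+1.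
  by exists ((r - r0)./2); lia.
- have -> : (r0 + j.*2 + r0)./2 = r0 + j by lia.
  by have := capacity_even_bound j; rewrite expnS; lia.
- have -> : ((r0 + j.*2).+1 + r0)./2 = r0 + j by lia.
  by rewrite capacity_odd_offset; have := capacity_even_bound j; rewrite expnS; lia.
Qed.

End Capacity.

(* The capacity bound summed over ranks 0 .. M-1: a doubling series, every
   power of two appearing at most twice. *)
Lemma sum_half_powers c M :
  \sum_(0 <= r < M) 2 ^ ((r + c)./2) <= 3 * 2 ^ ((M + c)./2).
Proof.
suff sum_le : \sum_(0 <= r < M) 2 ^ ((r + c)./2)
              <= 2 ^ ((M + c)./2) + 2 ^ (uphalf (M + c)).
  apply: leq_trans sum_le _.
  have : 2 ^ uphalf (M + c) <= 2 * 2 ^ ((M + c)./2).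
    by rewrite -expnS leq_exp2l // uphalf_half; case: odd.
  lia.
elim: M => [|M IH]; first by rewrite big_geq.
rewrite big_nat_recr //= expnS.
by move: IH; lia.
Qed.

Definition fits (r0 : nat) (s : sseq) : bool := size (items s) <= capacity r0 (rank s).

(* The weight of a heap: a sequence of rank r stands for 2^r insertions. *)
Definition weight (h : seq sseq) : nat := sumn [seq 2 ^ rank s | s <- h].

Definition ranks_increasing (h : seq sseq) : bool := sorted ltn (map rank h).

Lemma weight_ranks h : weight h = sumn [seq 2 ^ r | r <- map rank h].
Proof. by rewrite /weight -map_comp. Qed.

Lemma weight_cons s h : weight (s :: h) = 2 ^ rank s + weight h.
Proof. by []. Qed.

Lemma weight_cat h1 h2 : weight (h1 ++ h2) = weight h1 + weight h2.
Proof. by rewrite /weight map_cat sumn_cat. Qed.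

Lemma weight_filter (p : pred sseq) h : weight (filter p h) <= weight h.
Proof. by elim: h => //= s h IH; case: (p s); move: IH; rewrite /weight /=; lia. Qed.

Lemma weight_perm h h' : perm_eq h h' -> weight h = weight h'.
Proof. by move=> perm_h; apply/perm_sumn/perm_map. Qed.

Section Invariants.

Variable r0 : nat.

Lemma link_fits a b :
  fits r0 a -> fits r0 b -> rank a = rank b -> fits r0 (link r0 a b).
Proof.
rewrite /fits /link /items /rank /= => fit_a fit_b eq_ab.
have size_merged : size (merge leq a.1 b.1) <= (capacity r0 a.2).*2.
  by rewrite size_merge size_cat; rewrite -eq_ab in fit_b; lia.
case: ifP => // _; apply: leq_trans (size_reduce _) _; lia.
Qed.

Lemma consolidates_invariant l l' : consolidates r0 l l' -> all (fits r0) l ->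
  [/\ all (fits r0) l', weight l' = weight l & ranks_increasing l'].
Proof.
elim=> {l l'} [l l' perm_l sorted_l' fit_l | l a b rest l' perm_l eq_ab _ IH].
  by rewrite -(perm_all _ perm_l) (weight_perm perm_l).
rewrite (perm_all _ perm_l) (weight_perm perm_l) /= => /and3P [fit_a fit_b fit_rest].
have [-> -> ->] := IH (introT andP (conj (link_fits fit_a fit_b eq_ab) fit_rest)).
by rewrite /weight /= expnS -eq_ab mul2n -addnn addnA.
Qed.

Lemma shrinks_invariant h h' : shrinks h h' ->
  all (fits r0) h -> ranks_increasing h ->
  [/\ all (fits r0) h', weight h' <= weight h & ranks_increasing h'].
Proof.
move=> [h'' [shrunk ->]].
have [ranks_eq fit_h''] : map rank h'' = map rank h /\
                          (all (fits r0) h -> all (fits r0) h'').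
  elim: h h'' shrunk => [|s h IH] [|t h''] //= /andP [/andP [/eqP eq_r sub_t] rest].
  have [-> fit_rest] := IH _ rest; rewrite eq_r; split => // /andP [fit_s fit_h].
  by rewrite fit_rest // /fits eq_r (leq_trans (size_subseq sub_t)).
have weight_eq : weight h'' = weight h by rewrite !weight_ranks ranks_eq.
move=> /fit_h'' fit_all sorted_h; split.
- by rewrite all_filter (sub_all _ fit_all) // => s /= ->; rewrite implybT.
- by rewrite -weight_eq weight_filter.
- apply: (subseq_sorted ltn_trans (map_subseq rank (filter_subseq _ h''))).
  by rewrite ranks_eq.
Qed.

Lemma reachable_invariant h N : reachable r0 h N ->
  [/\ all (fits r0) h, weight h <= N & ranks_increasing h].
Proof.
elim=> {h N} [//|h n x h' _ [fit_h wt_h _] cons_h|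
              h1 n1 h2 n2 h' _ [fit_h1 wt_h1 _] _ [fit_h2 wt_h2 _] cons_h|
              h n h' _ [fit_h wt_h sorted_h] shrink_h].
- have fit_single : fits r0 ([:: x], 0) by [].
  have [-> -> ->] := consolidates_invariant cons_h (introT andP (conj fit_single fit_h)).
  by rewrite weight_cons expn0 add1n.
- have fit_cat : all (fits r0) (h1 ++ h2) by rewrite all_cat fit_h1.
  have [-> -> ->] := consolidates_invariant cons_h fit_cat.
  by rewrite weight_cat leq_add.
- have [-> wt_h' ->] := shrinks_invariant shrink_h fit_h sorted_h.
  by rewrite (leq_trans wt_h').
Qed.

End Invariants.

Lemma rank_weight h s : s \in h -> 2 ^ rank s <= weight h.
Proof. by move=> /perm_to_rem /weight_perm ->; rewrite weight_cons leq_addr. Qed.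

Lemma sum_increasing_le (f : nat -> nat) (l : seq nat) M :
  sorted ltn l -> all (fun r => r < M) l -> sumn (map f l) <= \sum_(0 <= r < M) f r.
Proof.
move=> sorted_l lt_M; rewrite sumnE big_map /index_iota subn0.
apply: (@uniq_sub_le_big nat addn leq leqnn (fun x y => leq_addr y x) 0).
- exact: sorted_uniq ltn_trans ltnn _ sorted_l.
- exact: iota_uniq.
- by move=> r /(allP lt_M); rewrite mem_iota.
Qed.

Lemma total_items_le_capacities r0 h : all (fits r0) h ->
  total_items h <= sumn (map (capacity r0) (map rank h)).
Proof.
elim: h => //= s h IH /andP [fit_s /IH].
by rewrite /total_items /= -/(total_items h); move: fit_s; rewrite /fits; lia.
Qed.

Lemma total_items_sq_bound r0 h N : 0 < N ->
  all (fits r0) h -> weight h <= N -> ranks_increasing h ->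
  total_items h * total_items h <= 288 * N * 2 ^ r0.
Proof.
move=> N_gt0 fit_h wt_h sorted_h.
set L := trunc_log 2 N; set e := (L.+1 + r0)./2.
have ranks_lt : all (fun r => r < L.+1) (map rank h).
  rewrite all_map; apply/allP => s s_in /=; rewrite ltnS.
  by apply: trunc_log_max => //; apply: leq_trans (rank_weight s_in) wt_h.
have total_le : total_items h <= 12 * 2 ^ e.
  have sum_capacities := sum_increasing_le (capacity r0) sorted_h ranks_lt.
  have : \sum_(0 <= r < L.+1) capacity r0 r
         <= 4 * \sum_(0 <= r < L.+1) 2 ^ ((r + r0)./2).
    by rewrite big_distrr leq_sum // => r _; exact: capacity_bound.
  have := sum_half_powers r0 L.+1; have := total_items_le_capacities fit_h.
  by rewrite -/e; lia.
have e_sq : 2 ^ e * 2 ^ e <= 2 * 2 ^ L * 2 ^ r0.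
  by rewrite -expnD -mulnA -expnD -expnS leq_pexp2l //; lia.
have log_le : 2 ^ L <= N by exact: trunc_logP.
have := leq_mul total_le total_le; have := leq_mul log_le (leqnn (2 ^ r0)); nia.
Qed.

Lemma INR_pow2 n : INR (2 ^ n) = pow 2 n.
Proof. by elim: n => [//|n IH]; rewrite expnS mulnE mult_INR IH /=; lra. Qed.

Lemma pow2_r0_lt eps r0 : (0 < eps)%R -> is_r0 eps r0 -> (pow 2 r0 < 2 * / eps)%R.
Proof.
move=> eps_gt0 [r0_lt _].
have ln2_gt0 : (0 < ln 2)%R by rewrite -ln_1; apply: ln_increasing; lra.
have inv_gt0 : (0 < / eps)%R by apply: Rinv_0_lt_compat.
apply: ln_lt_inv; [apply: pow_lt; lra | lra |].
rewrite ln_pow ?ln_mult; try lra.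
have : ((INR r0 - 1) * ln 2 < ln (/ eps))%R.
  apply: (Rmult_lt_reg_r (/ ln 2)); first exact: Rinv_0_lt_compat.
  by rewrite Rmult_assoc Rinv_r ?Rmult_1_r; lra.
lra.
Qed.

Lemma le_mul_sqrt T k A : (0 <= T)%R -> (0 <= k)%R -> (0 <= A)%R ->
  (T * T <= (k * k) * A)%R -> (T <= k * sqrt A)%R.
Proof.
move=> T_ge0 k_ge0 A_ge0 sq_le.
rewrite -(sqrt_square T) // -(sqrt_square k) // -sqrt_mult_alt; last nra.
exact: sqrt_le_1_alt.
Qed.

Theorem lemma3 :
  exists K : R, forall (eps : R) (r0 : nat),
    (0 < eps < 1)%R -> is_r0 eps r0 ->
    forall (N : nat) (h : seq sseq),
      (1 <= N)%N -> reachable r0 h N ->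
      (INR (total_items h) <= K * sqrt (INR N / eps))%R.
Proof.
exists 24%R => eps r0 [eps_gt0 eps_lt1] r0_eps N h N_ge1 reach_h.
have [fit_h wt_h sorted_h] := reachable_invariant reach_h.
have /leP/le_INR := total_items_sq_bound N_ge1 fit_h wt_h sorted_h.
rewrite !mulnE !mult_INR INR_pow2 => sq_bound.
have pow_lt := pow2_r0_lt eps_gt0 r0_eps.
have N_ge1R : (1 <= INR N)%R by apply: (le_INR 1); apply/leP.
have INR_288 : INR 288 = 288%R by rewrite /INR; lra.
rewrite INR_288 in sq_bound.
have inv_gt0 : (0 < / eps)%R by apply: Rinv_0_lt_compat.
have pow_scaled : (INR N * pow 2 r0 <= INR N * (2 * / eps))%R.
  by apply: Rmult_le_compat_l; lra.
apply: le_mul_sqrt; [exact: pos_INR | lra | rewrite /Rdiv; nra | rewrite /Rdiv; nra].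
Qed.
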